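(* Let $\varphi_A(X):=\sum_{i=1}^nA_iXA_i^*$ ($n\in\mathbb N$ or $n=\infty$) be a $w^*$-continuous completely positive linear map on $B(\mathcal H)$, and assume there is a positive operator $X\in B(\mathcal H)$, $X\ne0$, with $\varphi_A(X)\le X$. If one of the following holds, then there is a nontrivial subspace of $\mathcal H$ invariant under every $A_i$, $i=1,\dots,n$: (i) $X$ is not injective; (ii) $X$ is not pure with respect to $\varphi_A$ (i.e. $\varphi_A^k(X)$ does not converge strongly to $0$) and there is $h\in\mathcal H$, $h\ne0$, with $\lim_{k\to\infty}\varphi_A^k(X)h=0$; (iii) $\varphi_A(X)\ne X$ and the orbit of $X$ under $\varphi_A$ has a nonzero fixed point, i.e. there is $h\ne0$ with $\varphi_A^k(X)h=Xh$ for all $k=1,2,\dots$. *)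

From Stdlib Require Import Reals.
From Coquelicot Require Import Complex.
Open Scope R_scope.

Record HilbertSpace := {
  hcar :> Type;
  hzero : hcar;
  hadd : hcar -> hcar -> hcar;
  hopp : hcar -> hcar;
  hscal : C -> hcar -> hcar;
  hinner : hcar -> hcar -> C;
  hadd_assoc : forall x y z, hadd x (hadd y z) = hadd (hadd x y) z;
  hadd_comm : forall x y, hadd x y = hadd y x;
  hadd_0 : forall x, hadd x hzero = x;
  hadd_opp : forall x, hadd x (hopp x) = hzero;
  hscal_assoc : forall a b x, hscal a (hscal b x) = hscal (Cmult a b) x;
  hscal_1 : forall x, hscal (RtoC 1) x = x;
  hscal_distr_l : forall a x y, hscal a (hadd x y) = hadd (hscal a x) (hscal a y);
  hscal_distr_r : forall a b x, hscal (Cplus a b) x = hadd (hscal a x) (hscal b x);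
  hinner_add : forall x y z, hinner (hadd x y) z = Cplus (hinner x z) (hinner y z);
  hinner_scal : forall a x y, hinner (hscal a x) y = Cmult a (hinner x y);
  hinner_conj : forall x y, hinner x y = Cconj (hinner y x);
  hinner_pos : forall x, 0 <= Re (hinner x x);
  hinner_def : forall x, hinner x x = RtoC 0 -> x = hzero;
  hcomplete : forall u : nat -> hcar,
    (forall eps, 0 < eps -> exists N, forall m n, (N <= m)%nat -> (N <= n)%nat ->
        sqrt (Re (hinner (hadd (u m) (hopp (u n))) (hadd (u m) (hopp (u n))))) < eps) ->
    exists l, forall eps, 0 < eps -> exists N, forall n, (N <= n)%nat ->
        sqrt (Re (hinner (hadd (u n) (hopp l)) (hadd (u n) (hopp l)))) < eps
}.

Arguments hzero {h}.
Arguments hadd {h}.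
Arguments hopp {h}.
Arguments hscal {h}.
Arguments hinner {h}.

Section Ops.
Variable H : HilbertSpace.

Definition hsub (x y : H) : H := hadd x (hopp y).
Definition hnorm (x : H) : R := sqrt (Re (hinner x x)).

Definition hconverges (u : nat -> H) (l : H) : Prop :=
  forall eps, 0 < eps -> exists N, forall n, (N <= n)%nat -> hnorm (hsub (u n) l) < eps.

Fixpoint hpsum (f : nat -> H) (N : nat) : H :=
  match N with
  | O => hzero
  | S N' => hadd (hpsum f N') (f N')
  end.

Definition bounded_op (T : H -> H) : Prop :=
  (forall x y, T (hadd x y) = hadd (T x) (T y)) /\
  (forall a x, T (hscal a x) = hscal a (T x)) /\
  (exists M, forall x, hnorm (T x) <= M * hnorm x).

Definition is_adjoint (T S : H -> H) : Prop :=
  forall x y, hinner (T x) y = hinner x (S y).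

Definition positive_op (T : H -> H) : Prop :=
  bounded_op T /\
  forall h, Im (hinner (T h) h) = 0 /\ 0 <= Re (hinner (T h) h).

Definition op_le (Y X : H -> H) : Prop :=
  forall h, Im (hinner (hsub (X h) (Y h)) h) = 0 /\
            0 <= Re (hinner (hsub (X h) (Y h)) h).

(* Y = phi_A(X) = sum_i A_i X A_i^*, the series converging strongly:
   for every h,  sum_i A_i (X (A_i^* h))  converges in norm to  Y h. *)
Definition is_phi (A Astar : nat -> H -> H) (X Y : H -> H) : Prop :=
  forall h, hconverges (hpsum (fun i => A i (X (Astar i h)))) (Y h).

Definition phi_orbit (A Astar : nat -> H -> H) (X : H -> H) (Xs : nat -> H -> H)
  : Prop :=
  Xs O = X /\ forall k, is_phi A Astar (Xs k) (Xs (S k)).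

Definition closed_subspace (M : H -> Prop) : Prop :=
  M hzero /\
  (forall x y, M x -> M y -> M (hadd x y)) /\
  (forall a x, M x -> M (hscal a x)) /\
  (forall u l, (forall n, M (u n)) -> hconverges u l -> M l).

Definition has_nontrivial_common_invariant_subspace (A : nat -> H -> H) : Prop :=
  exists M : H -> Prop,
    closed_subspace M /\
    (exists x, M x /\ x <> hzero) /\
    (exists y, ~ M y) /\
    (forall i x, M x -> M (A i x)).

End Ops.

Arguments hsub {H}.
Arguments hnorm {H}.
Arguments hconverges {H}.
Arguments hpsum {H}.
Arguments bounded_op {H}.
Arguments is_adjoint {H}.
Arguments positive_op {H}.
Arguments op_le {H}.
Arguments is_phi {H}.
Arguments phi_orbit {H}.
Arguments closed_subspace {H}.
Arguments has_nontrivial_common_invariant_subspace {H}.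

From Stdlib Require Import Reals Lra Lia Psatz Classical ClassicalEpsilon FunctionalExtensionality.
From Coquelicot Require Import Complex.
Open Scope R_scope.

(* Each hypothesis yields a set K of vectors, stable under scalars and under every A_i^* and
   containing a nonzero vector, together with a nonzero self-adjoint operator T vanishing on K;
   the orthogonal complement of K is then a closed subspace invariant under every A_i which
   contains the range of T but not K.
   (i) K = ker X and T = X.  (ii) K = {h | phi^k(X) h -> 0} and T is the strong limit of the
   decreasing sequence phi^k(X).  (iii) K = {h | phi^k(X) h = X h for all k} and T = X - phi(X).
   Stability of K under A_i^* comes from <phi(Y) h, h> = sum_i <Y A_i^* h, A_i^* h>: for Y >= 0
   every term is bounded by the sum; apply this to Y = X, phi^k(X) and phi^k(X) - phi^(k+1)(X). *)

Lemma fun_neq_ex {T U : Type} (F G : T -> U) : F <> G -> exists z, F z <> G z.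
Proof. intro N. apply not_all_ex_not. intro E. apply N, functional_extensionality, E. Qed.

Lemma quadratic_nonneg_discr (a b c : R) :
  0 <= a -> (forall t, 0 <= c + 2 * b * t + a * t * t) -> b * b <= c * a.
Proof.
  intros Ha Ht. destruct (Req_dec a 0) as [Ea|Ea].
  - subst a. destruct (Req_dec b 0) as [Eb|Eb]; [subst b; lra|].
    specialize (Ht (- (c + 1) / (2 * b))).
    replace (c + 2 * b * (- (c + 1) / (2 * b)) + 0 * (- (c + 1) / (2 * b)) * (- (c + 1) / (2 * b)))
      with (-1) in Ht by (field; lra).
    lra.
  - specialize (Ht (- b / a)).
    replace (c + 2 * b * (- b / a) + a * (- b / a) * (- b / a)) with ((c * a - b * b) / a)
      in Ht by (field; lra).
    assert (0 < a) by lra.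
    assert (0 <= c * a - b * b); [|lra].
    replace (c * a - b * b) with ((c * a - b * b) / a * a) by (field; lra). nra.
Qed.

Lemma Un_cv_const (c : R) : Un_cv (fun _ => c) c.
Proof. intros e He. exists O. intros n _. unfold Rdist. rewrite Rminus_diag, Rabs_R0. exact He. Qed.

Lemma Un_cv_ge (u : nat -> R) (l c : R) (N0 : nat) :
  Un_cv u l -> (forall n, (N0 <= n)%nat -> c <= u n) -> c <= l.
Proof.
  intros Hu Hc. destruct (Rle_or_lt c l) as [|Hlt]; [assumption|].
  destruct (Hu (c - l)) as [N HN]; [lra|].
  specialize (HN (max N N0) ltac:(lia)). specialize (Hc (max N N0) ltac:(lia)).
  apply Rabs_def2 in HN. lra.
Qed.

Lemma Un_cv0_sqr_le (a b : nat -> R) :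
  (forall n, 0 <= a n) -> (forall n, a n * a n <= b n) -> Un_cv b 0 -> Un_cv a 0.
Proof.
  intros Ha Hab Hb e He. destruct (Hb (e * e)) as [N HN]; [nra|].
  exists N. intros n Hn. specialize (HN n Hn). specialize (Ha n). specialize (Hab n).
  unfold Rdist in *. rewrite Rminus_0_r in *. rewrite Rabs_pos_eq by lra.
  apply Rabs_def2 in HN. nra.
Qed.

Fixpoint rsum (f : nat -> R) (N : nat) : R :=
  match N with O => 0 | S N' => rsum f N' + f N' end.

Lemma rsum_ext f g N : (forall i, f i = g i) -> rsum f N = rsum g N.
Proof. intro E. induction N as [|N IH]; simpl; [reflexivity|]. rewrite IH, E. reflexivity. Qed.

Lemma rsum_plus f g N : rsum (fun i => f i + g i) N = rsum f N + rsum g N.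
Proof. induction N as [|N IH]; simpl; [ring|]. rewrite IH. ring. Qed.

Lemma rsum_minus f g N : rsum (fun i => f i - g i) N = rsum f N - rsum g N.
Proof. induction N as [|N IH]; simpl; [ring|]. rewrite IH. ring. Qed.

Lemma rsum_ge0 f N : (forall i, 0 <= f i) -> 0 <= rsum f N.
Proof. intro P. induction N as [|N IH]; simpl; [lra|]. specialize (P N). lra. Qed.

Lemma rsum_term_le f N i : (forall i, 0 <= f i) -> (i < N)%nat -> f i <= rsum f N.
Proof.
  intros P Hi. induction N as [|N IH]; [lia|]. simpl.
  destruct (Nat.eq_dec i N) as [->|Ne].
  - pose proof (rsum_ge0 f N P). lra.
  - pose proof (IH ltac:(lia)). specialize (P N). lra.
Qed.

Lemma Un_cv_rsum_term_le f l i : Un_cv (rsum f) l -> (forall i, 0 <= f i) -> f i <= l.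
Proof. intros Hf P. apply (Un_cv_ge (rsum f) l (f i) (S i) Hf). intros. apply rsum_term_le; auto; lia. Qed.

Lemma Un_cv_rsum_ge0 f l : Un_cv (rsum f) l -> (forall i, 0 <= f i) -> 0 <= l.
Proof. intros Hf P. apply (Un_cv_ge (rsum f) l 0 O Hf). intros. apply rsum_ge0, P. Qed.

Section Hilbert.
Context {H : HilbertSpace}.
Implicit Types x y z u v w : H.

Definition rinner x y : R := Re (hinner x y).

Lemma hadd_0l x : hadd hzero x = x.
Proof. rewrite hadd_comm. apply hadd_0. Qed.

Lemma hopp_0 : hopp (@hzero H) = hzero.
Proof. rewrite <- (hadd_0l (hopp hzero)). apply hadd_opp. Qed.

Lemma hsub_0 x : hsub x hzero = x.
Proof. unfold hsub. rewrite hopp_0. apply hadd_0. Qed.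

Lemma hsub_eq0 u v : hsub u v = hzero -> u = v.
Proof.
  intro E. rewrite <- (hadd_0 H u), <- (hadd_opp H v), (hadd_comm H v), hadd_assoc.
  fold (hsub u v). rewrite E. apply hadd_0l.
Qed.

Lemma hinner_addr x y z : hinner z (hadd x y) = Cplus (hinner z x) (hinner z y).
Proof.
  rewrite hinner_conj, hinner_add, (hinner_conj H z x), (hinner_conj H z y).
  destruct (hinner x z), (hinner y z). unfold Cconj, Cplus; simpl. f_equal; ring.
Qed.

Lemma hinner_scalr a x y : hinner x (hscal a y) = Cmult (Cconj a) (hinner x y).
Proof.
  rewrite hinner_conj, hinner_scal, (hinner_conj H y x).
  destruct a, (hinner x y). unfold Cconj, Cmult; simpl. f_equal; ring.
Qed.

Lemma hinner_scal_adj a x y : hinner (hscal a x) y = hinner x (hscal (Cconj a) y).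
Proof.
  rewrite hinner_scalr, hinner_scal. destruct a. unfold Cconj; simpl. f_equal. f_equal; ring.
Qed.

Lemma Im_hinner_self x : Im (hinner x x) = 0.
Proof.
  pose proof (hinner_conj H x x) as E. destruct (hinner x x) as [a b].
  unfold Cconj in E; simpl in *. injection E. lra.
Qed.

Lemma rinner_addl x y z : rinner (hadd x y) z = rinner x z + rinner y z.
Proof. unfold rinner. rewrite hinner_add. reflexivity. Qed.

Lemma rinner_0l z : rinner hzero z = 0.
Proof. pose proof (rinner_addl hzero hzero z) as E. rewrite hadd_0 in E. lra. Qed.

Lemma rinner_oppl x z : rinner (hopp x) z = - rinner x z.
Proof. pose proof (rinner_addl x (hopp x) z) as E. rewrite hadd_opp, rinner_0l in E. lra. Qed.

Lemma rinner_subl x y z : rinner (hsub x y) z = rinner x z - rinner y z.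
Proof. unfold hsub. rewrite rinner_addl, rinner_oppl. ring. Qed.

Lemma rinner_sym x y : rinner x y = rinner y x.
Proof. unfold rinner. rewrite (hinner_conj H x y). reflexivity. Qed.

Lemma rinner_0r z : rinner z hzero = 0.
Proof. rewrite rinner_sym. apply rinner_0l. Qed.

Lemma rinner_subr x y z : rinner z (hsub x y) = rinner z x - rinner z y.
Proof. rewrite !(rinner_sym z). apply rinner_subl. Qed.

Lemma rinner_sub_swap u v : rinner (hsub u v) (hsub u v) = rinner (hsub v u) (hsub v u).
Proof. rewrite !rinner_subl, !rinner_subr, (rinner_sym u v). ring. Qed.

Lemma rinner_scalRl t x y : rinner (hscal (RtoC t) x) y = t * rinner x y.
Proof. unfold rinner. rewrite hinner_scal. destruct (hinner x y). unfold RtoC, Cmult; simpl. ring. Qed.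

Lemma rinner_scal_adj a x y : rinner (hscal a x) y = rinner x (hscal (Cconj a) y).
Proof. unfold rinner. rewrite hinner_scal_adj. reflexivity. Qed.

Lemma rinner_ge0 x : 0 <= rinner x x.
Proof. apply hinner_pos. Qed.

Lemma rinner_eq0 x : rinner x x = 0 -> x = hzero.
Proof.
  intro E. apply hinner_def. unfold rinner in E. pose proof (Im_hinner_self x) as E'.
  destruct (hinner x x). simpl in *. subst. reflexivity.
Qed.

Lemma rinner_ext u v : (forall z, rinner u z = rinner v z) -> u = v.
Proof. intro E. apply hsub_eq0, rinner_eq0. rewrite rinner_subl, E. ring. Qed.

Lemma hscal_0 a : hscal a (@hzero H) = hzero.
Proof.
  apply rinner_ext. intro z. rewrite rinner_0l.
  pose proof (rinner_addl (hscal a hzero) (hscal a hzero) z) as E.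
  rewrite <- hscal_distr_l, hadd_0 in E. lra.
Qed.

Lemma hnorm_ge0 x : 0 <= hnorm x.
Proof. apply sqrt_pos. Qed.

Lemma hnorm_sqr x : hnorm x * hnorm x = rinner x x.
Proof. apply sqrt_sqrt, rinner_ge0. Qed.

Lemma hnorm_lt x e : 0 < e -> (hnorm x < e <-> rinner x x < e * e).
Proof. intro He. rewrite <- hnorm_sqr. pose proof (hnorm_ge0 x). split; intro; nra. Qed.

Lemma hnorm_scal a x : hnorm (hscal a x) = Cmod a * hnorm x.
Proof.
  unfold hnorm, Cmod. rewrite <- sqrt_mult by (nra || apply rinner_ge0). f_equal.
  fold (rinner (hscal a x) (hscal a x)) (rinner x x).
  unfold rinner. rewrite hinner_scal, hinner_scalr. pose proof (Im_hinner_self x).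
  destruct (hinner x x), a. simpl in *. subst. ring.
Qed.

Record psd_form (q : H -> H -> R) : Prop := {
  psd_form_addl : forall x1 x2 y, q (hadd x1 x2) y = q x1 y + q x2 y;
  psd_form_scalRl : forall t x y, q (hscal (RtoC t) x) y = t * q x y;
  psd_form_sym : forall x y, q x y = q y x;
  psd_form_ge0 : forall x, 0 <= q x x }.

Lemma psd_form_cauchy_schwarz q : psd_form q -> forall x y, q x y * q x y <= q x x * q y y.
Proof.
  intros [qadd qscal qsym qge0] x y. apply quadratic_nonneg_discr; [apply qge0|]. intro t.
  replace (q x x + 2 * q x y * t + q y y * t * t)
    with (q (hadd x (hscal (RtoC t) y)) (hadd x (hscal (RtoC t) y))); [apply qge0|].
  rewrite qadd, qscal, (qsym x), (qsym y), !qadd, !qscal, (qsym y x). ring.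
Qed.

Lemma psd_form_null q x y : psd_form q -> q x x = 0 -> q x y = 0.
Proof. intros Hq E. pose proof (psd_form_cauchy_schwarz q Hq x y). rewrite E in *. nra. Qed.

Lemma rinner_psd_form : psd_form rinner.
Proof. split; [apply rinner_addl | apply rinner_scalRl | apply rinner_sym | apply rinner_ge0]. Qed.

Lemma rinner_cauchy_schwarz x y : Rabs (rinner x y) <= hnorm x * hnorm y.
Proof.
  pose proof (psd_form_cauchy_schwarz _ rinner_psd_form x y) as CS.
  rewrite <- !hnorm_sqr in CS. pose proof (hnorm_ge0 x). pose proof (hnorm_ge0 y).
  apply Rsqr_incr_0_var; [unfold Rsqr; rewrite <- Rabs_mult, Rabs_pos_eq; nra | nra].
Qed.

(* Cauchy-Schwarz for q at x and T x. The form q of T is a separate argument so that it can be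
   a difference of forms. *)
Lemma psd_form_op_sqr_le q (T : H -> H) c :
  psd_form q -> (forall x y, q x y = rinner (T x) y) -> 0 <= c ->
  (forall z, q z z <= c * rinner z z) -> forall x, rinner (T x) (T x) <= c * q x x.
Proof.
  intros Hq qT Hc Hbound x.
  pose proof (psd_form_cauchy_schwarz q Hq x (T x)) as CS. rewrite (qT x (T x)) in CS.
  pose proof (Hbound (T x)) as B.
  pose proof (psd_form_ge0 q Hq x). pose proof (rinner_ge0 (T x)).
  set (s := rinner (T x) (T x)) in *.
  destruct (Req_dec s 0) as [E|E]; [rewrite E; nra|].
  apply Rmult_le_reg_l with s; [lra|]. nra.
Qed.

Record psd_op (T : H -> H) : Prop := {
  psd_op_add : forall x y, T (hadd x y) = hadd (T x) (T y);
  psd_op_scal : forall a x, T (hscal a x) = hscal a (T x);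
  psd_op_sym : forall x y, rinner (T x) y = rinner x (T y);
  psd_op_ge0 : forall x, 0 <= rinner (T x) x }.

Lemma psd_op_form T : psd_op T -> psd_form (fun x y => rinner (T x) y).
Proof.
  intros [Tadd Tscal Tsym Tge0]. split.
  - intros. rewrite Tadd. apply rinner_addl.
  - intros. rewrite Tscal. apply rinner_scalRl.
  - intros. rewrite Tsym. apply rinner_sym.
  - exact Tge0.
Qed.

Lemma psd_op_null T x : psd_op T -> rinner (T x) x = 0 -> T x = hzero.
Proof.
  intros HT E. apply rinner_ext. intro y. rewrite rinner_0l.
  exact (psd_form_null _ x y (psd_op_form T HT) E).
Qed.

(* On a complex space, <T h, h> real for all h forces T to be Hermitian: polarize with h = x + y
   and h = i x + y. *)
Lemma positive_op_psd T : positive_op T -> psd_op T.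
Proof.
  intros [[Tadd [Tscal _]] Tpos].
  assert (ImT : forall x y, Im (hinner (T x) y) + Im (hinner (T y) x) = 0).
  { intros x y. pose proof (proj1 (Tpos (hadd x y))) as E.
    rewrite Tadd, hinner_add, !hinner_addr in E.
    pose proof (proj1 (Tpos x)). pose proof (proj1 (Tpos y)).
    destruct (hinner (T x) x), (hinner (T x) y), (hinner (T y) x), (hinner (T y) y).
    simpl in *. lra. }
  split; [exact Tadd | exact Tscal | | intro x; apply Tpos].
  intros x y. pose proof (ImT (hscal Ci x) y) as E.
  rewrite Tscal, hinner_scal, hinner_scalr in E.
  unfold rinner. rewrite (hinner_conj H x (T y)).
  destruct (hinner (T x) y), (hinner (T y) x). simpl in *. lra.
Qed.

Lemma positive_op_bound T : positive_op T ->
  exists c, 0 <= c /\ forall z, rinner (T z) z <= c * rinner z z.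
Proof.
  intros [[_ [_ [M HM]]] _]. exists (Rmax M 0). split; [apply Rmax_r|]. intro z.
  apply Rle_trans with (hnorm (T z) * hnorm z).
  - eapply Rle_trans; [apply Rle_abs | apply rinner_cauchy_schwarz].
  - rewrite <- hnorm_sqr. pose proof (hnorm_ge0 z). pose proof (hnorm_ge0 (T z)).
    pose proof (HM z). pose proof (Rmax_l M 0). nra.
Qed.

Lemma hconverges_rinner (u : nat -> H) l z :
  hconverges u l -> Un_cv (fun n => rinner (u n) z) (rinner l z).
Proof.
  intros Hu e He. pose proof (hnorm_ge0 z).
  destruct (Hu (e / (hnorm z + 1))) as [N HN]; [apply Rdiv_lt_0_compat; lra|].
  exists N. intros n Hn. specialize (HN n Hn). unfold Rdist.
  rewrite <- rinner_subl. eapply Rle_lt_trans; [apply rinner_cauchy_schwarz|].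
  pose proof (hnorm_ge0 (hsub (u n) l)).
  apply Rle_lt_trans with (e / (hnorm z + 1) * hnorm z); [nra|].
  replace e with (e / (hnorm z + 1) * (hnorm z + 1)) at 2 by (field; lra).
  apply Rmult_lt_compat_l; [apply Rdiv_lt_0_compat|]; lra.
Qed.

Lemma hconverges_unique (u : nat -> H) l l' : hconverges u l -> hconverges u l' -> l = l'.
Proof.
  intros Hl Hl'. apply rinner_ext. intro z.
  eapply UL_sequence; apply hconverges_rinner; eassumption.
Qed.

Lemma hconverges0_hnorm (u : nat -> H) : hconverges u hzero <-> Un_cv (fun n => hnorm (u n)) 0.
Proof.
  unfold hconverges, Un_cv, Rdist.
  assert (E : forall n, Rabs (hnorm (u n) - 0) = hnorm (hsub (u n) hzero)).
  { intro n. rewrite hsub_0, Rminus_0_r. apply Rabs_pos_eq, hnorm_ge0. }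
  split; intros Hu e He; destruct (Hu e He) as [N HN]; exists N; intros n Hn;
    specialize (HN n Hn); rewrite ?E in *; exact HN.
Qed.

Lemma hconverges0_scal a (u : nat -> H) :
  hconverges u hzero -> hconverges (fun n => hscal a (u n)) hzero.
Proof.
  rewrite !hconverges0_hnorm. intro Hu.
  eapply Un_cv_ext; [intro n; symmetry; apply hnorm_scal|].
  rewrite <- (Rmult_0_r (Cmod a)). exact (CV_mult _ _ _ _ (Un_cv_const _) Hu).
Qed.

Lemma rinner_hpsum (f : nat -> H) N z : rinner (hpsum f N) z = rsum (fun i => rinner (f i) z) N.
Proof. induction N as [|N IH]; simpl; [apply rinner_0l|]. rewrite rinner_addl, IH. reflexivity. Qed.

End Hilbert.

Section Adjoint.
Context {H : HilbertSpace} {A Astar : nat -> H -> H}.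
Hypothesis hAstar : forall i, is_adjoint (A i) (Astar i).

Lemma rinner_adj i w z : rinner (A i w) z = rinner w (Astar i z).
Proof. unfold rinner. rewrite hAstar. reflexivity. Qed.

Lemma adjoint_add i x y : Astar i (hadd x y) = hadd (Astar i x) (Astar i y).
Proof.
  apply rinner_ext. intro z.
  rewrite rinner_addl, !(rinner_sym _ z), <- !rinner_adj, rinner_sym, rinner_addl.
  rewrite !(rinner_sym (A i z)). reflexivity.
Qed.

Lemma adjoint_scal i a x : Astar i (hscal a x) = hscal a (Astar i x).
Proof.
  apply rinner_ext. intro z. rewrite !(rinner_sym _ z). unfold rinner.
  rewrite <- hAstar, !hinner_scalr, hAstar. reflexivity.
Qed.

Lemma is_phi_rinner T S : is_phi A Astar T S ->
  forall h z, Un_cv (rsum (fun i => rinner (T (Astar i h)) (Astar i z))) (rinner (S h) z).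
Proof.
  intros HS h z. eapply Un_cv_ext; [|exact (hconverges_rinner _ _ z (HS h))].
  intro N. simpl. rewrite rinner_hpsum. apply rsum_ext. intro i. apply rinner_adj.
Qed.

Lemma phi_psd T S : psd_op T -> is_phi A Astar T S -> psd_op S.
Proof.
  intros [Tadd Tscal Tsym Tge0] HS. pose proof (is_phi_rinner T S HS) as Hlim. split.
  - intros x y. apply rinner_ext. intro z. rewrite rinner_addl.
    eapply UL_sequence; [apply Hlim|].
    eapply Un_cv_ext; [|exact (CV_plus _ _ _ _ (Hlim x z) (Hlim y z))].
    intro N. simpl. rewrite <- rsum_plus. apply rsum_ext. intro i.
    rewrite adjoint_add, Tadd, rinner_addl. reflexivity.
  - intros a x. apply rinner_ext. intro z. rewrite rinner_scal_adj.
    eapply UL_sequence; [apply Hlim|].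
    eapply Un_cv_ext; [|exact (Hlim x (hscal (Cconj a) z))].
    intro N. simpl. apply rsum_ext. intro i.
    rewrite !adjoint_scal, Tscal, rinner_scal_adj. reflexivity.
  - intros x y. rewrite (rinner_sym x). eapply UL_sequence; [apply Hlim|].
    eapply Un_cv_ext; [|exact (Hlim y x)].
    intro N. simpl. apply rsum_ext. intro i. rewrite Tsym, rinner_sym. reflexivity.
  - intro x. apply (Un_cv_rsum_ge0 _ _ (Hlim x x)). intro i. apply Tge0.
Qed.

Lemma phi_term_le T S i y : (forall x, 0 <= rinner (T x) x) -> is_phi A Astar T S ->
  rinner (T (Astar i y)) (Astar i y) <= rinner (S y) y.
Proof.
  intros Tge0 HS. apply (Un_cv_rsum_term_le _ _ i (is_phi_rinner T S HS y y)).
  intro j. apply Tge0.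
Qed.

Lemma phi_gap_rsum T S T' S' y : is_phi A Astar T S -> is_phi A Astar T' S' ->
  Un_cv (rsum (fun i => rinner (T (Astar i y)) (Astar i y) - rinner (T' (Astar i y)) (Astar i y)))
        (rinner (S y) y - rinner (S' y) y).
Proof.
  intros HS HS'.
  eapply Un_cv_ext; [|exact (CV_minus _ _ _ _ (is_phi_rinner T S HS y y) (is_phi_rinner T' S' HS' y y))].
  intro N. simpl. symmetry. apply rsum_minus.
Qed.

Lemma phi_monotone T S T' S' y : (forall x, rinner (T' x) x <= rinner (T x) x) ->
  is_phi A Astar T S -> is_phi A Astar T' S' -> rinner (S' y) y <= rinner (S y) y.
Proof.
  intros Hle HS HS'. cut (0 <= rinner (S y) y - rinner (S' y) y); [lra|].
  apply (Un_cv_rsum_ge0 _ _ (phi_gap_rsum T S T' S' y HS HS')). intro i.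
  specialize (Hle (Astar i y)). lra.
Qed.

Lemma phi_gap_term_le T S T' S' i y : (forall x, rinner (T' x) x <= rinner (T x) x) ->
  is_phi A Astar T S -> is_phi A Astar T' S' ->
  rinner (T (Astar i y)) (Astar i y) - rinner (T' (Astar i y)) (Astar i y)
    <= rinner (S y) y - rinner (S' y) y.
Proof.
  intros Hle HS HS'. apply (Un_cv_rsum_term_le _ _ i (phi_gap_rsum T S T' S' y HS HS')).
  intro j. specialize (Hle (Astar j y)). lra.
Qed.

(* Orthogonality is tested on real parts only; since K is stable under multiplication by i,
   this is the genuine orthogonal complement. *)
Lemma orth_invariant_subspace (K : H -> Prop) (T : H -> H) :
  (forall a y, K y -> K (hscal a y)) ->
  (forall i y, K y -> K (Astar i y)) ->
  (exists h, K h /\ h <> hzero) ->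
  (forall x y, rinner (T x) y = rinner x (T y)) ->
  (forall y, K y -> T y = hzero) ->
  (exists z, T z <> hzero) ->
  has_nontrivial_common_invariant_subspace A.
Proof.
  intros Kscal Kadj [h [Kh hnz]] Tsym TK [z Tz].
  exists (fun x => forall y, K y -> rinner x y = 0). split; [|split; [|split]].
  - split; [|split; [|split]].
    + intros. apply rinner_0l.
    + intros x x' Mx Mx' y Ky. rewrite rinner_addl, Mx, Mx' by exact Ky. ring.
    + intros a x Mx y Ky. rewrite rinner_scal_adj. apply Mx, Kscal, Ky.
    + intros u l Mu Hu y Ky. eapply UL_sequence; [exact (hconverges_rinner u l y Hu)|].
      eapply Un_cv_ext; [|apply Un_cv_const]. intro n. simpl. symmetry. apply Mu, Ky.
  - exists (T z). split; [|exact Tz]. intros y Ky. rewrite Tsym, TK by exact Ky. apply rinner_0r.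
  - exists h. intro Mh. apply hnz, rinner_eq0, Mh, Kh.
  - intros i x Mx y Ky. rewrite rinner_adj. apply Mx, Kadj, Ky.
Qed.

End Adjoint.

Section Orbit.
Context {H : HilbertSpace} {A Astar : nat -> H -> H}.
Hypothesis hAstar : forall i, is_adjoint (A i) (Astar i).
Context {X : H -> H} {Xs : nat -> H -> H}.
Hypothesis hXpos : positive_op X.
Hypothesis hXs : phi_orbit A Astar X Xs.
Hypothesis hsub_harm : op_le (Xs 1%nat) X.

Let Xs0 : Xs O = X := proj1 hXs.
Let Xs_step k : is_phi A Astar (Xs k) (Xs (S k)) := proj2 hXs k.

Lemma orbit_psd k : psd_op (Xs k).
Proof.
  induction k as [|k IH]; [rewrite Xs0; apply positive_op_psd, hXpos|].
  exact (phi_psd hAstar _ _ IH (Xs_step k)).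
Qed.

Lemma orbit_step_le k x : rinner (Xs (S k) x) x <= rinner (Xs k x) x.
Proof.
  revert x. induction k as [|k IH]; intro x.
  - rewrite Xs0. pose proof (proj2 (hsub_harm x)) as E.
    fold (rinner (hsub (X x) (Xs 1%nat x)) x) in E. rewrite rinner_subl in E. lra.
  - exact (phi_monotone hAstar _ _ _ _ x IH (Xs_step k) (Xs_step (S k))).
Qed.

Lemma orbit_antitone n m x : (n <= m)%nat -> rinner (Xs m x) x <= rinner (Xs n x) x.
Proof. induction 1; [lra|]. eapply Rle_trans; [apply orbit_step_le | assumption]. Qed.

Lemma orbit_bound : exists c, 0 <= c /\ forall k z, rinner (Xs k z) z <= c * rinner z z.
Proof.
  destruct (positive_op_bound X hXpos) as [c [Hc HX]]. exists c. split; [exact Hc|].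
  intros k z. rewrite <- Xs0 in HX. eapply Rle_trans; [apply (orbit_antitone O k z); lia | apply HX].
Qed.

Lemma orbit_sqr_bound : exists c, 0 <= c /\
  forall k z, rinner (Xs k z) (Xs k z) <= c * rinner (Xs k z) z.
Proof.
  destruct orbit_bound as [c [Hc HXs]]. exists c. split; [exact Hc|]. intros k.
  exact (psd_form_op_sqr_le _ (Xs k) c (psd_op_form _ (orbit_psd k)) (fun _ _ => eq_refl) Hc (HXs k)).
Qed.

Definition orbit_gap n m x y := rinner (Xs n x) y - rinner (Xs m x) y.

Lemma orbit_gap_psd n m : (n <= m)%nat -> psd_form (orbit_gap n m).
Proof.
  intro Hnm. destruct (orbit_psd n) as [Nadd Nscal Nsym _], (orbit_psd m) as [Madd Mscal Msym _].
  unfold orbit_gap. split.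
  - intros. rewrite Nadd, Madd, !rinner_addl. ring.
  - intros. rewrite Nscal, Mscal, !rinner_scalRl. ring.
  - intros. rewrite Nsym, Msym, !(rinner_sym x). reflexivity.
  - intro x. pose proof (orbit_antitone n m x Hnm). lra.
Qed.

Lemma orbit_gap_bound : exists c, 0 <= c /\ forall n m z,
  rinner (hsub (Xs n z) (Xs m z)) (hsub (Xs n z) (Xs m z))
    <= c * Rabs (rinner (Xs n z) z - rinner (Xs m z) z).
Proof.
  destruct orbit_bound as [c [Hc HXs]]. exists c. split; [exact Hc|].
  assert (Hle : forall n m z, (n <= m)%nat ->
    rinner (hsub (Xs n z) (Xs m z)) (hsub (Xs n z) (Xs m z)) <= c * orbit_gap n m z z).
  { intros n m z Hnm. apply (psd_form_op_sqr_le _ (fun x => hsub (Xs n x) (Xs m x)) c).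
    - exact (orbit_gap_psd n m Hnm).
    - intros. symmetry. apply rinner_subl.
    - exact Hc.
    - intro w. pose proof (psd_op_ge0 _ (orbit_psd m) w). pose proof (HXs n w).
      unfold orbit_gap. lra. }
  intros n m z. destruct (Nat.le_ge_cases n m) as [Hnm|Hmn].
  - eapply Rle_trans; [exact (Hle n m z Hnm)|]. apply Rmult_le_compat_l; [exact Hc|apply Rle_abs].
  - rewrite rinner_sub_swap. eapply Rle_trans; [exact (Hle m n z Hmn)|]. rewrite Rabs_minus_sym.
    apply Rmult_le_compat_l; [exact Hc|apply Rle_abs].
Qed.

(* <phi^k(X) z, z> decreases, hence is Cauchy, and orbit_gap_bound transfers this to phi^k(X) z. *)
Lemma orbit_strong_limit z : exists l, hconverges (fun k => Xs k z) l.
Proof.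
  destruct orbit_gap_bound as [c [Hc Hgap]].
  assert (Hcauchy : Cauchy_crit (fun k => rinner (Xs k z) z)).
  { apply CV_Cauchy, decreasing_cv.
    - intro n. apply orbit_step_le.
    - exists 0. intros r [n ->]. unfold opp_seq. pose proof (psd_op_ge0 _ (orbit_psd n) z). lra. }
  apply hcomplete. intros e He.
  set (d := e * e / (c + 1)).
  assert (Hd : 0 < d) by (apply Rdiv_lt_0_compat; nra).
  assert (Ed : (c + 1) * d = e * e) by (unfold d; field; lra).
  destruct (Hcauchy d Hd) as [N HN]. exists N. intros m n Hm Hn.
  change (hnorm (hsub (Xs m z) (Xs n z)) < e). apply hnorm_lt; [exact He|].
  specialize (HN m n Hm Hn). unfold Rdist in HN. specialize (Hgap m n z).
  pose proof (Rabs_pos (rinner (Xs m z) z - rinner (Xs n z) z)). nra.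
Qed.

Lemma kernel_adjoint_closed i y : X y = hzero -> X (Astar i y) = hzero.
Proof.
  intro Xy. apply (psd_op_null X); [apply positive_op_psd, hXpos|].
  pose proof (psd_op_ge0 _ (positive_op_psd X hXpos) (Astar i y)).
  pose proof (phi_term_le hAstar _ _ i y (psd_op_ge0 _ (orbit_psd O)) (Xs_step O)) as Hle.
  pose proof (orbit_step_le O y) as Hstep.
  rewrite Xs0 in Hle, Hstep. rewrite Xy, rinner_0l in Hstep. lra.
Qed.

Lemma pure_adjoint_closed i y : hconverges (fun k => Xs k y) hzero ->
  hconverges (fun k => Xs k (Astar i y)) hzero.
Proof.
  rewrite !hconverges0_hnorm. intro Hy. destruct orbit_sqr_bound as [c [Hc Hsqr]].
  apply Un_cv0_sqr_le with (fun k => c * hnorm y * hnorm (Xs (S k) y)).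
  - intro k. apply hnorm_ge0.
  - intro k. rewrite hnorm_sqr. eapply Rle_trans; [apply Hsqr|].
    rewrite Rmult_assoc. apply Rmult_le_compat_l; [exact Hc|].
    eapply Rle_trans; [exact (phi_term_le hAstar _ _ i y (psd_op_ge0 _ (orbit_psd k)) (Xs_step k))|].
    rewrite Rmult_comm. eapply Rle_trans; [apply Rle_abs | apply rinner_cauchy_schwarz].
  - rewrite <- (Rmult_0_r (c * hnorm y)). apply CV_mult; [apply Un_cv_const|].
    eapply Un_cv_ext; [|exact (CV_shift' _ 1 _ Hy)]. intro k. simpl. rewrite Nat.add_1_r. reflexivity.
Qed.

Lemma fixed_adjoint_closed i y : (forall k, Xs k y = X y) -> forall k, Xs k (Astar i y) = X (Astar i y).
Proof.
  intros Hy k. induction k as [|k IH]; [rewrite Xs0; reflexivity|]. rewrite <- IH.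
  apply rinner_ext. intro w. apply eq_sym, Rminus_diag_uniq.
  apply (psd_form_null (orbit_gap k (S k))); [apply orbit_gap_psd; lia|].
  apply Rle_antisym; [|apply (orbit_gap_psd k (S k)); lia].
  unfold orbit_gap. rewrite <- (Rminus_diag (rinner (X y) y)).
  rewrite <- (Hy (S k)) at 1. rewrite <- (Hy (S (S k))).
  exact (phi_gap_term_le hAstar _ _ _ _ i y (orbit_step_le k) (Xs_step k) (Xs_step (S k))).
Qed.


Lemma invariant_subspace_of_kernel h : X <> (fun _ => hzero) -> h <> hzero -> X h = hzero ->
  has_nontrivial_common_invariant_subspace A.
Proof.
  intros hXnz hnz Xh. pose proof (positive_op_psd X hXpos) as [_ Xscal Xsym _].
  apply (orth_invariant_subspace hAstar (fun y => X y = hzero) X).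
  - intros a y Xy. rewrite Xscal, Xy. apply hscal_0.
  - exact kernel_adjoint_closed.
  - exists h. split; assumption.
  - exact Xsym.
  - trivial.
  - exact (fun_neq_ex _ _ hXnz).
Qed.

Lemma invariant_subspace_of_pure_vector h :
  (~ forall h, hconverges (fun k => Xs k h) hzero) ->
  h <> hzero -> hconverges (fun k => Xs k h) hzero ->
  has_nontrivial_common_invariant_subspace A.
Proof.
  intros Hnp hnz Hh. destruct (choice _ orbit_strong_limit) as [L HL].
  apply (orth_invariant_subspace hAstar (fun y => hconverges (fun k => Xs k y) hzero) L).
  - intros a y Hy.
    replace (fun k => Xs k (hscal a y)) with (fun k => hscal a (Xs k y))
      by (apply functional_extensionality; intro k; symmetry; apply (orbit_psd k)).
    apply hconverges0_scal, Hy.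
  - exact pure_adjoint_closed.
  - exists h. split; assumption.
  - intros x y. rewrite (rinner_sym x). eapply UL_sequence; [exact (hconverges_rinner _ _ y (HL x))|].
    eapply Un_cv_ext; [|exact (hconverges_rinner _ _ x (HL y))].
    intro k. simpl. rewrite (psd_op_sym _ (orbit_psd k)). apply rinner_sym.
  - intros y Hy. exact (hconverges_unique _ _ _ (HL y) Hy).
  - destruct (not_all_ex_not _ _ Hnp) as [z Hz]. exists z. intro Lz. apply Hz. rewrite <- Lz. apply HL.
Qed.

Lemma invariant_subspace_of_fixed_vector h : Xs 1%nat <> X ->
  h <> hzero -> (forall k, (1 <= k)%nat -> Xs k h = X h) ->
  has_nontrivial_common_invariant_subspace A.
Proof.
  intros Hne hnz Hh. pose proof (positive_op_psd X hXpos) as [_ Xscal Xsym _].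
  apply (orth_invariant_subspace hAstar (fun y => forall k, Xs k y = X y)
           (fun z => hsub (X z) (Xs 1%nat z))).
  - intros a y Hy k. rewrite (psd_op_scal _ (orbit_psd k)), Hy, Xscal. reflexivity.
  - exact fixed_adjoint_closed.
  - exists h. split; [|exact hnz]. intros [|k]; [rewrite Xs0; reflexivity|]. apply Hh. lia.
  - intros x y. rewrite rinner_subl, rinner_subr, Xsym, (psd_op_sym _ (orbit_psd 1)). reflexivity.
  - intros y Hy. rewrite Hy. apply hadd_opp.
  - destruct (fun_neq_ex _ _ Hne) as [z Hz]. exists z. intro E. apply Hz, eq_sym, hsub_eq0, E.
Qed.

End Orbit.

Theorem theorem4p3
  (H : HilbertSpace)
  (A Astar : nat -> H -> H)
  (hA : forall i, bounded_op (A i))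
  (hAstar : forall i, is_adjoint (A i) (Astar i))
  (* w*-continuity of phi_A: sum_i A_i A_i^* converges strongly, i.e. its
     partial sums are uniformly bounded *)
  (hwstar : exists M, forall (N : nat) (h : H),
      hnorm (hpsum (fun i => A i (Astar i h)) N) <= M * hnorm h)
  (X : H -> H)
  (hXpos : positive_op X)
  (hXnz : X <> (fun _ => hzero))
  (Xs : nat -> H -> H)
  (hXs : phi_orbit A Astar X Xs)
  (hsub_harm : op_le (Xs 1%nat) X) :
  ( (* (i) X is not injective *)
    (exists h : H, h <> hzero /\ X h = hzero)
    \/
    (* (ii) X is not pure, but phi^k(X) h -> 0 for some h <> 0 *)
    ((~ forall h : H, hconverges (fun k => Xs k h) hzero) /\
     exists h : H, h <> hzero /\ hconverges (fun k => Xs k h) hzero)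
    \/
    (* (iii) phi(X) <> X, and the orbit of X has a nonzero common fixed vector *)
    (Xs 1%nat <> X /\
     exists h : H, h <> hzero /\ forall k, (1 <= k)%nat -> Xs k h = X h) )
  -> has_nontrivial_common_invariant_subspace A.
Proof.
  intros [[h [hnz Xh]] | [[Hnp [h [hnz Hh]]] | [Hne [h [hnz Hh]]]]].
  - exact (invariant_subspace_of_kernel hAstar hXpos hXs hsub_harm h hXnz hnz Xh).
  - exact (invariant_subspace_of_pure_vector hAstar hXpos hXs hsub_harm h Hnp hnz Hh).
  - exact (invariant_subspace_of_fixed_vector hAstar hXpos hXs hsub_harm h Hne hnz Hh).
Qed.
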